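(* Let $R$ be a commutative ring, $M$ an $R$-module and $C$ an $R$-linear relation on $M$. If $IM\subseteq(C^{-1})'+C'$ for some ideal $I$ of $R$, then $C^\sharp\cap IM\subseteq C^\flat$; in particular $C^\sharp/C^\flat$ is an $R/I$-module. Furthermore, if $I=\mathrm{rad}(R)$ is the Jacobson radical and $R$ is perfect, then there is an $R[T,T^{-1}]$-module $P$ which is projective over $R$ and such that $P/IP\cong C^\sharp/C^\flat$ as $(R/I)[T,T^{-1}]$-modules.
   Context: An $R$-linear relation on $M$ is a submodule $C\subseteq M\oplus M$; $Cm=\{m':(m,m')\in C\}$, $C^{-1}=\{(y,x):(x,y)\in C\}$. $C''$: the set of $m\in M$ for which there exists $(m_n)_{n\in\mathbb{N}}$ with $m_0=m$ and $m_{n+1}\in Cm_n$ for all $n$; $C'$: those for which such a sequence exists with $m_n=0$ for $n\gg0$; $C^\sharp=C''\cap(C^{-1})''$; $C^\flat=C''\cap(C^{-1})'+(C^{-1})''\cap C'$. $C^\sharp/C^\flat$ is an $R[T,T^{-1}]$-module, $T$ acting by the automorphism $m+C^\flat\mapsto m'+C^\flat$ where $m'\in C^\sharp\cap(C^\flat+Cm)$. A ring is perfect if every module has a projective cover. *)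

From HB Require Import structures.
From mathcomp Require Import all_boot all_order all_algebra.
Set Implicit Arguments. Unset Strict Implicit. Unset Printing Implicit Defensive.
Import GRing.Theory.
Local Open Scope ring_scope.

Section Ideals.
Variable R : comPzRingType.

Definition is_ideal (I : R -> Prop) : Prop :=
  [/\ I 0, (forall x y, I x -> I y -> I (x + y)) & (forall r x, I x -> I (r * x))].

Definition is_maximal_ideal (J : R -> Prop) : Prop :=
  [/\ is_ideal J, ~ J 1 &
      forall K : R -> Prop, is_ideal K -> (forall x, J x -> K x) ->
        K 1 \/ (forall x, K x -> J x)].

Definition is_jacobson_radical (I : R -> Prop) : Prop :=
  forall x, I x <-> (forall J, is_maximal_ideal J -> J x).
End Ideals.

Section Modules.
Variable R : comPzRingType.

Definition is_submodule (M : lmodType R) (K : M -> Prop) : Prop :=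
  [/\ K 0, (forall x y, K x -> K y -> K (x + y)) & (forall r x, K x -> K (r *: x))].

Inductive ideal_mul (I : R -> Prop) (M : lmodType R) : M -> Prop :=
  | ideal_mul0 : ideal_mul I 0
  | ideal_mulZ r m : I r -> ideal_mul I (r *: m)
  | ideal_mulD a b : ideal_mul I a -> ideal_mul I b -> ideal_mul I (a + b).

Definition projective (P : lmodType R) : Prop :=
  forall (A B : lmodType R) (f : {linear A -> B}) (g : {linear P -> B}),
    (forall b, exists a, f a = b) ->
    exists h : {linear P -> A}, forall x, f (h x) = g x.

Definition projective_cover (N P : lmodType R) (p : {linear P -> N}) : Prop :=
  [/\ projective P, (forall n, exists x, p x = n) &
      (* the kernel of p is superfluous *)
      forall K : P -> Prop, is_submodule K ->
        (forall x, exists k y, [/\ K k, p y = 0 & x = k + y]) ->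
        forall x, K x].

Definition perfect_ring : Prop :=
  forall N : lmodType R, exists (P : lmodType R) (p : {linear P -> N}),
    projective_cover p.
End Modules.

Section LinRel.
Variables (R : comPzRingType) (M : lmodType R).

(* an R-linear relation C ⊆ M ⊕ M; C x y means (x, y) ∈ C, i.e. y ∈ C x *)
Definition is_linrel (C : M -> M -> Prop) : Prop :=
  [/\ C 0 0, (forall a b c d, C a b -> C c d -> C (a + c) (b + d)) &
      (forall r a b, C a b -> C (r *: a) (r *: b))].

Definition linrel_inv (C : M -> M -> Prop) : M -> M -> Prop := fun x y => C y x.

(* C'' : elements admitting an infinite C-chain *)
Definition lr_dd (C : M -> M -> Prop) (m : M) : Prop :=
  exists f : nat -> M, f 0%N = m /\ forall n, C (f n) (f n.+1).

(* C' : elements admitting a C-chain which is eventually 0 *)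
Definition lr_d (C : M -> M -> Prop) (m : M) : Prop :=
  exists (f : nat -> M) (N : nat),
    [/\ f 0%N = m, (forall n, C (f n) (f n.+1)) & (forall n, (N <= n)%N -> f n = 0)].

Definition lr_sharp (C : M -> M -> Prop) (m : M) : Prop :=
  lr_dd C m /\ lr_dd (linrel_inv C) m.

Definition lr_flat (C : M -> M -> Prop) (m : M) : Prop :=
  exists a b, [/\ (lr_dd C a /\ lr_d (linrel_inv C) a),
                  (lr_dd (linrel_inv C) b /\ lr_d C b) & m = a + b].
End LinRel.

(* An R[T,T^{-1}]-module P (R-module with R-linear automorphism T) and an
   isomorphism of (R/I)[T,T^{-1}]-modules P/IP ~= C^sharp/C^flat, encoded by
   its graph lifted to representatives: Phi p m  means  phi(p + IP) = m + C^flat. *)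
Definition quotient_iso (R : comPzRingType) (I : R -> Prop) (M : lmodType R)
  (C : M -> M -> Prop) (P : lmodType R) (T : P -> P) (Phi : P -> M -> Prop) : Prop :=
  [/\
      (Phi 0 0 /\ (forall p q m n, Phi p m -> Phi q n -> Phi (p + q) (m + n)) /\
        (forall r p m, Phi p m -> Phi (r *: p) (r *: m))),
      (forall p m, Phi p m -> lr_sharp C m) /\
      (forall p, exists m, Phi p m),
      (forall m, lr_sharp C m -> exists p, Phi p m),
      (* well defined on P/IP and injective: kernel is exactly IP *)
      (forall p m, Phi p m -> (lr_flat C m <-> ideal_mul I p)) &
      (* compatible with T: T(m + C^flat) = m' + C^flat, m' in C^sharp ∩ (C^flat + C m) *)
      (forall p m, Phi p m -> exists m', Phi (T p) m' /\
          exists f c, [/\ lr_flat C f, C m c & m' = f + c])].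

From HB Require Import structures.
From mathcomp Require Import all_boot all_order all_algebra.
From mathcomp Require Import boolp finmap monalg.
From Stdlib Require Import ClassicalEpsilon.
Set Implicit Arguments. Unset Strict Implicit. Unset Printing Implicit Defensive.
Import GRing.Theory.
Local Open Scope ring_scope.

(* Chains can be added, scaled, shifted and prolonged, so C'', C', C^sharp and
   C^flat are submodules, and C sends C^flat-cosets of C^sharp to C^flat-cosets.
   If m lies in C^sharp and m = a + b with a in (C^-1)' and b in C', then
   a = m - b lies in C'' and b = m - a in (C^-1)'', so m lies in C^flat.

   Hence C and C^-1 induce mutually inverse linear maps of Q = C^sharp/C^flat.
   Lift them along a projective cover p : P -> Q to S, S' : P -> P.  Since
   ker p is superfluous, an endomorphism g of P with p g = p is onto, hence
   (P being projective) bijective; applied to S'S and SS' this makes S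
   bijective.  The graph of p identifies P/IP with Q: IP lies in ker p because
   IQ = 0, and ker p lies in IP because, P being a summand of a free module,
   it suffices that every linear form phi on P maps ker p into each maximal
   ideal J; otherwise J + phi(ker p) = R, and superfluity of ker p forces
   1 in J. *)

Section Submodules.
Variables (R : comPzRingType) (M : lmodType R).

Section Closure.
Variables (K : M -> Prop) (hK : is_submodule K).

Lemma submod0 : K 0. Proof. by case: hK. Qed.

Lemma submodD x y : K x -> K y -> K (x + y).
Proof. by case: hK => _ hD _; apply: hD. Qed.

Lemma submodZ r x : K x -> K (r *: x).
Proof. by case: hK => _ _ hZ; apply: hZ. Qed.

Lemma submodN x : K x -> K (- x).
Proof. by move=> /(submodZ (-1)); rewrite scaleN1r. Qed.

Lemma submodB x y : K x -> K y -> K (x - y).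
Proof. by move=> Kx /submodN; apply: submodD. Qed.
End Closure.

Lemma submodI (K L : M -> Prop) :
  is_submodule K -> is_submodule L -> is_submodule (fun x => K x /\ L x).
Proof.
move=> hK hL; split; first by split; apply: submod0.
- by move=> x y [Kx Lx] [Ky Ly]; split; apply: submodD.
- by move=> r x [Kx Lx]; split; apply: submodZ.
Qed.

Definition submod_add (K L : M -> Prop) (x : M) :=
  exists a b, [/\ K a, L b & x = a + b].

Lemma submod_add_submodule (K L : M -> Prop) :
  is_submodule K -> is_submodule L -> is_submodule (submod_add K L).
Proof.
move=> hK hL; split.
- by exists 0, 0; rewrite addr0; split=> //; apply: submod0.
- move=> _ _ [a [b [Ka Lb ->]]] [a' [b' [Ka' Lb' ->]]].
  by exists (a + a'), (b + b'); rewrite addrACA; split=> //; apply: submodD.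
- move=> r _ [a [b [Ka Lb ->]]].
  by exists (r *: a), (r *: b); rewrite scalerDr; split=> //; apply: submodZ.
Qed.

Record submodule := Submodule {
  submod_mem :> M -> Prop;
  submodP : is_submodule submod_mem }.
End Submodules.

Section LinearRelation.
Variables (R : comPzRingType) (M : lmodType R) (C : M -> M -> Prop).
Hypothesis HC : is_linrel C.

Lemma linrel0 : C 0 0. Proof. by case: HC. Qed.

Lemma linrelD a b c d : C a b -> C c d -> C (a + c) (b + d).
Proof. by case: HC => _ hD _; apply: hD. Qed.

Lemma linrelZ r a b : C a b -> C (r *: a) (r *: b).
Proof. by case: HC => _ _ hZ; apply: hZ. Qed.

Lemma linrelB a b c d : C a b -> C c d -> C (a - c) (b - d).
Proof. by move=> Cab /(linrelZ (-1)); rewrite !scaleN1r; apply: linrelD. Qed.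

Lemma linrel_inv_linrel : is_linrel (linrel_inv C).
Proof.
by split=> [|a b c d|r a b]; [apply: linrel0 | apply: linrelD | apply: linrelZ].
Qed.

Lemma lr_dd_submodule : is_submodule (lr_dd C).
Proof.
split.
- by exists (fun=> 0); split=> // n; apply: linrel0.
- move=> _ _ [f [<- Cf]] [g [<- Cg]].
  by exists (fun n => f n + g n); split=> // n; apply: linrelD.
- move=> r _ [f [<- Cf]].
  by exists (fun n => r *: f n); split=> // n; apply: linrelZ.
Qed.

Lemma lr_d_submodule : is_submodule (lr_d C).
Proof.
split.
- by exists (fun=> 0), 0%N; split=> // n; apply: linrel0.
- move=> _ _ [f [N [<- Cf f0]]] [g [N' [<- Cg g0]]].
  exists (fun n => f n + g n), (maxn N N'); split=> // [n|n].
    exact: linrelD.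
  by rewrite geq_max => /andP[/f0 -> /g0 ->]; rewrite addr0.
- move=> r _ [f [N [<- Cf f0]]].
  exists (fun n => r *: f n), N; split=> // [n|n /f0 ->]; last exact: scaler0.
  exact: linrelZ.
Qed.

Lemma lr_d_dd x : lr_d C x -> lr_dd C x.
Proof. by move=> [f [N [f0 Cf _]]]; exists f. Qed.

Lemma lr_dd_step x : lr_dd C x -> exists2 y, C x y & lr_dd C y.
Proof. by move=> [f [<- Cf]]; exists (f 1%N) => //; exists (fun n => f n.+1). Qed.

Lemma lr_d_step x : lr_d C x -> exists2 y, C x y & lr_d C y.
Proof.
move=> [f [N [<- Cf f0]]]; exists (f 1%N) => //.
by exists (fun n => f n.+1), N; split=> // n /leqW; apply: f0.
Qed.

Lemma lr_dd_cons x y : C x y -> lr_dd C y -> lr_dd C x.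
Proof.
move=> Cxy [f [f0 Cf]]; exists (fun n => if n is k.+1 then f k else x).
by split=> // -[|n] //=; rewrite f0.
Qed.

Lemma lr_d_cons x y : C x y -> lr_d C y -> lr_d C x.
Proof.
move=> Cxy [f [N [f0 Cf fN]]].
exists (fun n => if n is k.+1 then f k else x), N.+1.
split=> // [[|n] /=|[|n] //=]; [by rewrite f0 | exact: Cf | exact: fN].
Qed.
End LinearRelation.

Section SharpFlat.
Variables (R : comPzRingType) (M : lmodType R) (C : M -> M -> Prop).
Hypothesis HC : is_linrel C.
Let HCV := linrel_inv_linrel HC.

Lemma lr_sharp_inv : lr_sharp (linrel_inv C) = lr_sharp C.
Proof. by apply/funext => m; apply/propext; split=> -[]. Qed.

Lemma lr_flat_inv : lr_flat (linrel_inv C) = lr_flat C.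
Proof.
apply/funext => m; apply/propext.
by split=> -[a [b [Ha Hb ->]]]; exists b, a; rewrite addrC.
Qed.

Lemma lr_sharp_submodule : is_submodule (lr_sharp C).
Proof. exact: submodI (lr_dd_submodule HC) (lr_dd_submodule HCV). Qed.

Lemma lr_flat_submodule : is_submodule (lr_flat C).
Proof.
apply: submod_add_submodule; apply: submodI;
  by [apply: lr_dd_submodule | apply: lr_d_submodule].
Qed.

Lemma lr_flat_sharp m : lr_flat C m -> lr_sharp C m.
Proof.
move=> [a [b [[a_dd /lr_d_dd a_ddV] [b_ddV /lr_d_dd b_dd] ->]]].
by apply: (submodD lr_sharp_submodule); split.
Qed.

Lemma lr_sharp_step m : lr_sharp C m -> exists2 c, C m c & lr_sharp C c.
Proof.
move=> [m_dd m_ddV]; have [c Cmc c_dd] := lr_dd_step m_dd.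
by exists c => //; split=> //; apply: lr_dd_cons m_ddV.
Qed.

Lemma lr_flat_step u x : lr_flat C u -> C u x -> lr_sharp C x -> lr_flat C x.
Proof.
move=> [a [b [[a_dd a_dV] [b_ddV b_d] ->]]] Cux [x_dd x_ddV].
have [b1 Cbb1 b1_d] := lr_d_step b_d.
have Cax : C a (x - b1) by have := linrelB HC Cux Cbb1; rewrite addrK.
exists (x - b1), b1; split; last by rewrite subrK.
- split; last exact: lr_d_cons Cax a_dV.
  exact: (submodB (lr_dd_submodule HC) x_dd (lr_d_dd b1_d)).
- by split=> //; apply: lr_dd_cons Cbb1 b_ddV.
Qed.

Lemma lr_sharp_flat m a b : lr_sharp C m ->
  lr_d (linrel_inv C) a -> lr_d C b -> m = a + b -> lr_flat C m.
Proof.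
move=> [m_dd m_ddV] a_dV b_d m_ab; exists a, b; split=> //; split=> //.
- have -> : a = m - b by rewrite m_ab addrK.
  exact: (submodB (lr_dd_submodule HC) m_dd (lr_d_dd b_d)).
- have -> : b = m - a by rewrite m_ab addrC addKr.
  exact: (submodB (lr_dd_submodule HCV) m_ddV (lr_d_dd a_dV)).
Qed.
End SharpFlat.

Section Subquotient.
Variables (R : comPzRingType) (M : lmodType R) (A B : submodule M).
Let hA := submodP A.
Let hB := submodP B.

(* [subquot A B] is the quotient of A by its intersection with B, realised by
   the representatives [sqrepr] chosen in each class of A modulo B. *)
Definition sqrepr (m : M) : M := epsilon (inhabits 0) (fun y => A y /\ B (y - m)).

Lemma sqreprP m : A m -> A (sqrepr m) /\ B (sqrepr m - m).
Proof.
move=> Am; apply: (epsilon_spec (inhabits 0) (fun y => A y /\ B (y - m))); exists m.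
by rewrite subrr; split=> //; apply: (submod0 hB).
Qed.

Lemma sqrepr_eq m m' : B (m - m') -> sqrepr m = sqrepr m'.
Proof.
move=> Bmm'; rewrite /sqrepr; f_equal; apply/funext => y /=; apply/propext.
have -> : y - m' = (y - m) + (m - m') by rewrite addrA subrK.
split=> -[Ay By]; split=> //; first exact: (submodD hB).
by have := submodB hB By Bmm'; rewrite addrK.
Qed.

Lemma sqrepr_canonical m : A m ->
  `[< A (sqrepr m) /\ sqrepr (sqrepr m) = sqrepr m >].
Proof.
move=> Am; have [Ar Br] := sqreprP Am.
by apply/asboolP; split=> //; apply: sqrepr_eq.
Qed.

Record subquot := SubQuot {
  sqval : M;
  _ : `[< A sqval /\ sqrepr sqval = sqval >] }.

HB.instance Definition _ := [isSub for sqval].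
HB.instance Definition _ := [Equality of subquot by <:].
HB.instance Definition _ := [Choice of subquot by <:].

Lemma sqvalP a : A (sqval a) /\ sqrepr (sqval a) = sqval a.
Proof. by case: a => m /= /asboolP. Qed.

Lemma sqval_mem a : A (sqval a).
Proof. by case: (sqvalP a). Qed.

Definition sqproj (m : M) : subquot :=
  insubd (SubQuot (sqrepr_canonical (submod0 hA))) (sqrepr m).

Lemma sqval_proj m : A m -> sqval (sqproj m) = sqrepr m.
Proof. by move=> Am; rewrite /sqproj insubdK //; apply: sqrepr_canonical. Qed.

Lemma sqval_projB m : A m -> B (sqval (sqproj m) - m).
Proof. by move=> Am; rewrite sqval_proj //; case: (sqreprP Am). Qed.

Lemma sqvalK : cancel sqval sqproj.
Proof.
move=> a; apply: val_inj => /=; have [Aa ra] := sqvalP a.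
by rewrite sqval_proj.
Qed.

Lemma sqproj_onto a : exists2 m, A m & a = sqproj m.
Proof. by exists (sqval a); rewrite ?sqvalK //; apply: sqval_mem. Qed.

Lemma sqproj_eq m m' : B (m - m') -> sqproj m = sqproj m'.
Proof. by rewrite /sqproj => /sqrepr_eq ->. Qed.

Lemma sqproj_eqP m m' : A m -> A m' -> sqproj m = sqproj m' <-> B (m - m').
Proof.
move=> Am Am'; split=> [e|]; last exact: sqproj_eq.
have -> : m - m' = (m - sqval (sqproj m)) + (sqval (sqproj m') - m').
  by rewrite e addrA subrK.
apply: (submodD hB); last exact: sqval_projB.
by rewrite -opprB; apply/(submodN hB)/sqval_projB.
Qed.

Definition sqadd a b := sqproj (sqval a + sqval b).
Definition sqopp a := sqproj (- sqval a).
Definition sqscale r a := sqproj (r *: sqval a).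

Lemma sqaddE x y : A x -> A y -> sqadd (sqproj x) (sqproj y) = sqproj (x + y).
Proof.
move=> Ax Ay; apply: sqproj_eq.
by rewrite opprD addrACA; apply: (submodD hB); apply: sqval_projB.
Qed.

Lemma sqoppE x : A x -> sqopp (sqproj x) = sqproj (- x).
Proof.
by move=> Ax; apply: sqproj_eq; rewrite -opprD; apply/(submodN hB)/sqval_projB.
Qed.

Lemma sqscaleE r x : A x -> sqscale r (sqproj x) = sqproj (r *: x).
Proof.
by move=> Ax; apply: sqproj_eq; rewrite -scalerBr; apply/(submodZ hB)/sqval_projB.
Qed.

Lemma sqaddA : associative sqadd.
Proof.
move=> a b c; have [x Ax ->] := sqproj_onto a.
have [y Ay ->] := sqproj_onto b; have [z Az ->] := sqproj_onto c.
by rewrite !sqaddE ?addrA //; apply: (submodD hA).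
Qed.

Lemma sqaddC : commutative sqadd.
Proof. by move=> a b; rewrite /sqadd addrC. Qed.

Lemma sqadd0 : left_id (sqproj 0) sqadd.
Proof.
move=> a; have [x Ax ->] := sqproj_onto a.
by rewrite sqaddE ?add0r //; apply: (submod0 hA).
Qed.

Lemma sqaddN : left_inverse (sqproj 0) sqopp sqadd.
Proof.
move=> a; have [x Ax ->] := sqproj_onto a.
by rewrite sqoppE // sqaddE ?addNr //; apply: (submodN hA).
Qed.

HB.instance Definition _ := GRing.isZmodule.Build subquot sqaddA sqaddC sqadd0 sqaddN.

Lemma sqscaleA r s a : sqscale r (sqscale s a) = sqscale (r * s) a.
Proof.
have [x Ax ->] := sqproj_onto a.
by rewrite !sqscaleE ?scalerA //; apply: (submodZ hA).
Qed.

Lemma sqscale1 : left_id 1 sqscale.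
Proof. by move=> a; rewrite /sqscale scale1r sqvalK. Qed.

Lemma sqscaleDr : right_distributive sqscale sqadd.
Proof.
move=> r a b; have [x Ax ->] := sqproj_onto a; have [y Ay ->] := sqproj_onto b.
rewrite sqaddE // !sqscaleE ?sqaddE ?scalerDr //;
  by [apply: (submodZ hA) | apply: (submodD hA)].
Qed.

Lemma sqscaleDl a : {morph sqscale^~ a : r s / r + s >-> sqadd r s}.
Proof.
move=> r s; have [x Ax ->] := sqproj_onto a.
by rewrite !sqscaleE ?sqaddE ?scalerDl //; apply: (submodZ hA).
Qed.

HB.instance Definition _ :=
  GRing.Zmodule_isLmodule.Build R subquot sqscaleA sqscale1 sqscaleDr sqscaleDl.

Lemma sqproj0 : sqproj 0 = 0.
Proof. by []. Qed.

Lemma sqprojD x y : A x -> A y -> sqproj (x + y) = sqproj x + sqproj y.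
Proof. by move=> Ax Ay; rewrite -sqaddE. Qed.

Lemma sqprojZ r x : A x -> sqproj (r *: x) = r *: sqproj x.
Proof. by move=> Ax; rewrite -sqscaleE. Qed.

Lemma sqproj_eq0 m : A m -> sqproj m = 0 <-> B m.
Proof.
move=> Am; rewrite -sqproj0; have := sqproj_eqP Am (submod0 hA).
by rewrite subr0.
Qed.
End Subquotient.

Section InducedMap.
Variables (R : comPzRingType) (M : lmodType R) (A B : submodule M).

Definition sqcompat (D : M -> M -> Prop) :=
  [/\ is_linrel D, forall m, A m -> exists2 c, D m c & A c
    & forall u x, B u -> D u x -> A x -> B x].

Definition sqinduced (D : M -> M -> Prop) : subquot A B -> subquot A B :=
  fun a => sqproj A B (epsilon (inhabits 0) (fun c => D (sqval a) c /\ A c)).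

Variable D : M -> M -> Prop.
Hypothesis hD : sqcompat D.

Lemma sqinducedE m c :
  A m -> D m c -> A c -> sqinduced D (sqproj A B m) = sqproj A B c.
Proof.
have [HD Dtot DB] := hD; move=> Am Dmc Ac; set a := sqproj A B m.
rewrite /sqinduced; set c0 := epsilon _ _.
have [Dac0 Ac0] : D (sqval a) c0 /\ A c0.
  apply: (epsilon_spec (inhabits 0) (fun c => D (sqval a) c /\ A c)).
  by have [c1 Dac1 Ac1] := Dtot _ (sqval_mem a); exists c1.
apply: sqproj_eq; apply: (DB (sqval a - m)); first exact: sqval_projB.
  exact: linrelB.
exact: (submodB (submodP A)).
Qed.

Lemma sqinduced_linear : linear (sqinduced D).
Proof.
have [HD Dtot _] := hD; have hA := submodP A.
move=> r a b; have [x Ax ->] := sqproj_onto a; have [y Ay ->] := sqproj_onto b.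
have [cx Dx Acx] := Dtot x Ax; have [cy Dy Acy] := Dtot y Ay.
have Arx := submodZ hA r Ax; have Arcx := submodZ hA r Acx.
rewrite -sqprojZ // -sqprojD // !(sqinducedE _ Dx, sqinducedE _ Dy) //.
rewrite (sqinducedE (c := r *: cx + cy)); first by rewrite sqprojD ?sqprojZ.
- exact: submodD.
- exact: linrelD (linrelZ HD r Dx) Dy.
- exact: submodD.
Qed.
End InducedMap.
Arguments sqinduced {R M} A B D.

Lemma sqinducedK (R : comPzRingType) (M : lmodType R) (A B : submodule M)
    (D : M -> M -> Prop) :
  sqcompat A B D -> sqcompat A B (linrel_inv D) ->
  cancel (sqinduced A B D) (sqinduced A B (linrel_inv D)).
Proof.
move=> hD hDV a; have [x Ax ->] := sqproj_onto a.
have [_ Dtot _] := hD; have [c Dxc Ac] := Dtot x Ax.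
by rewrite (sqinducedE hD Ax Dxc Ac) (sqinducedE hDV Ac Dxc Ax).
Qed.

Section FreeModule.
Variables (R : comPzRingType) (K : choiceType).

Definition freemod := {malg R[K]}.
HB.instance Definition _ := GRing.Zmodule.on freemod.

(* monalg defines the scalar action on [{malg R[K]}] only for nonzero rings. *)
Definition fmscale (c : R) (g : freemod) : freemod :=
  [malg k in msupp g => c * g@_k].

Lemma fmscaleE c g k : (fmscale c g)@_k = c * g@_k.
Proof. by rewrite mcoeffE; case: msuppP; rewrite ?mulr0. Qed.

Lemma fmscaleA c d g : fmscale c (fmscale d g) = fmscale (c * d) g.
Proof. by apply/malgP => k; rewrite !fmscaleE mulrA. Qed.

Lemma fmscale1 : left_id 1 fmscale.
Proof. by move=> g; apply/malgP => k; rewrite fmscaleE mul1r. Qed.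

Lemma fmscaleDr : right_distributive fmscale +%R.
Proof. by move=> c g h; apply/malgP => k; rewrite !(fmscaleE, mcoeffD) mulrDr. Qed.

Lemma fmscaleDl g : {morph fmscale^~ g : c d / c + d}.
Proof. by move=> c d; apply/malgP => k; rewrite !(fmscaleE, mcoeffD) mulrDl. Qed.

HB.instance Definition _ :=
  GRing.Zmodule_isLmodule.Build R freemod fmscaleA fmscale1 fmscaleDr fmscaleDl.

Definition fmcoord (k : K) (g : freemod) : R := g@_k.

Lemma fmcoord_linear k : linear_for *%R (fmcoord k).
Proof. by move=> c g h; rewrite /fmcoord mcoeffD fmscaleE. Qed.

HB.instance Definition _ k :=
  GRing.isLinear.Build R freemod R *%R (fmcoord k) (fmcoord_linear k).

Lemma msupp_le (g : freemod) (d : {fset K}) :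
  (forall k, k \notin d -> g@_k = 0) -> (msupp g `<=` d)%fset.
Proof.
move=> gd; apply/fsubsetP => k; rewrite -mcoeff_neq0.
by apply: contraR => /gd ->; rewrite eqxx.
Qed.
End FreeModule.

Section FreeCover.
Variables (R : comPzRingType) (P : lmodType R).

Definition fmcomb (g : freemod R P) : P := \sum_(k <- msupp g) g@_k *: k.

Lemma fmcombEw g (d : {fset P}) :
  (msupp g `<=` d)%fset -> fmcomb g = \sum_(k <- d) g@_k *: k.
Proof.
move=> gd; apply: big_fset_incl => // k _ kg.
by rewrite mcoeff_outdom // scale0r.
Qed.

Lemma fmcomb_linear : linear fmcomb.
Proof.
move=> r g h; set d := (msupp g `|` msupp h)%fset.
rewrite (@fmcombEw g d) ?fsubsetUl // (@fmcombEw h d) ?fsubsetUr //.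
rewrite (@fmcombEw _ d); last first.
  apply: msupp_le => k; rewrite in_fsetU negb_or => /andP[kg kh].
  by rewrite mcoeffD fmscaleE !mcoeff_outdom // mulr0 addr0.
rewrite scaler_sumr -big_split; apply: eq_bigr => k _ /=.
by rewrite mcoeffD fmscaleE scalerDl scalerA.
Qed.

HB.instance Definition _ :=
  GRing.isLinear.Build R (freemod R P) P *:%R fmcomb fmcomb_linear.

Lemma fmcomb_surj x : exists g, fmcomb g = x.
Proof.
exists << 1 *g x >>.
by rewrite (fmcombEw msuppU_le) big_seq_fset1 mcoeffUU scale1r.
Qed.

Lemma projective_coords :
  projective P -> exists s : {linear P -> freemod R P}, forall x, fmcomb (s x) = x.
Proof. by move=> projP; apply: projP _ _ fmcomb idfun fmcomb_surj. Qed.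

Lemma ideal_mul_sum (I : R -> Prop) (s : seq P) (F : P -> R) :
  (forall k, I (F k)) -> ideal_mul I (\sum_(k <- s) F k *: k).
Proof.
move=> IF; elim: s => [|k s IHs]; first by rewrite big_nil; apply: ideal_mul0.
by rewrite big_cons; apply: ideal_mulD => //; apply: ideal_mulZ.
Qed.
End FreeCover.

Lemma projective_lift (R : comPzRingType) (N P : lmodType R) (p : {linear P -> N})
    (g : N -> N) :
  projective P -> (forall n, exists x, p x = n) -> linear g ->
  exists S : {linear P -> P}, forall x, p (S x) = g (p x).
Proof.
move=> projP psurj glin.
pose gl := HB.pack_for {linear N -> N} g (GRing.isLinear.Build R N N *:%R g glin).
exact: projP _ _ p (gl \o p) psurj.
Qed.

Section ProjectiveCover.
Variables (R : comPzRingType) (N P : lmodType R) (p : {linear P -> N}).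
Hypothesis cover : projective_cover p.

Lemma cover_endo_surj (g : {linear P -> P}) :
  (forall x, p (g x) = p x) -> forall y, exists x, g x = y.
Proof.
have [_ _ superfluous] := cover; move=> pg.
apply: (superfluous (fun y => exists x, g x = y)) => [|y].
  split=> [|_ _ [x <-] [y <-]|r _ [x <-]].
  - by exists 0; rewrite linear0.
  - by exists (x + y); rewrite linearD.
  - by exists (r *: x); rewrite linearZ.
exists (g y), (y - g y); split; first by exists y.
  by rewrite linearB pg subrr.
by rewrite addrC subrK.
Qed.

Lemma cover_endo_bij (g : {linear P -> P}) :
  (forall x, p (g x) = p x) -> bijective g.
Proof.
move=> pg; have [projP _ _] := cover.
have [h gh] := projP _ _ g idfun (cover_endo_surj pg).
have {}gh x : g (h x) = x := gh x.
have ph x : p (h x) = p x by rewrite -[in RHS](gh x) pg.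
exists h => [x|]; last exact: gh.
by have [y <-] := cover_endo_surj ph x; rewrite gh.
Qed.

Lemma cover_lift_bij (S S' : {linear P -> P}) :
  (forall x, p (S' (S x)) = p x) -> (forall x, p (S (S' x)) = p x) -> bijective S.
Proof.
move=> pS'S pSS'.
have [u uK Ku] := cover_endo_bij (g := S' \o S) pS'S.
have [v vK Kv] := cover_endo_bij (g := S \o S') pSS'.
exists (u \o S') => [x|x /=]; first exact: uK.
by rewrite -{1}(Kv x) /= (uK (S' (v x))); apply: Kv.
Qed.

Lemma cover_functional_ideal (phi : {linear P -> R | *%R}) (J : R -> Prop) :
  is_ideal J -> (exists j k, [/\ J j, p k = 0 & 1 = j + phi k]) -> J 1.
Proof.
move=> [J0 JD JM] [j [k [Jj pk e1]]]; have [_ _ superfluous] := cover.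
have Jk : J (phi k).
  apply: (superfluous (fun y => J (phi y))) => [|y].
    split=> [|y z Jy Jz|r y Jy]; rewrite ?linear0 ?linearD ?linearZ //=.
    - exact: JD.
    - exact: JM.
  exists (y - phi y *: k), (phi y *: k); split; last by rewrite subrK.
  - by rewrite linearB linearZ /= -{1}[phi y]mulr1 -mulrBr e1 addrK; apply: JM.
  - by rewrite linearZ_LR pk scaler0.
by rewrite e1; apply: JD.
Qed.

Variable I : R -> Prop.
Hypothesis Irad : is_jacobson_radical I.

Lemma cover_functional_rad (phi : {linear P -> R | *%R}) x : p x = 0 -> I (phi x).
Proof.
move=> px0; apply/Irad => J [Jideal J1 Jmax]; have [J0 JD JM] := Jideal.
pose K a := exists j k, [/\ J j, p k = 0 & a = j + phi k].
have Kideal : is_ideal K.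
  split=> [|_ _ [j [k [Jj pk ->]]] [j' [k' [Jj' pk' ->]]]|r _ [j [k [Jj pk ->]]]].
  - by exists 0, 0; rewrite !linear0 addr0.
  - exists (j + j'), (k + k'); rewrite !linearD pk pk' addr0 addrACA.
    by split=> //; apply: JD.
  - exists (r * j), (r *: k); rewrite linearZ_LR linearZ /= pk scaler0 mulrDr.
    by split=> //; apply: JM.
have JK a : J a -> K a by move=> Ja; exists a, 0; rewrite !linear0 addr0.
case: (Jmax K Kideal JK) => [[j [k [Jj pk e1]]]|KJ].
  by exfalso; apply: J1; apply: (cover_functional_ideal (phi := phi) Jideal); exists j, k.
by apply: KJ; exists 0, x; rewrite add0r.
Qed.

Lemma cover_kernel_rad x : p x = 0 -> ideal_mul I x.
Proof.
move=> px0; have [projP _ _] := cover; have [s sK] := projective_coords projP.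
rewrite -(sK x); apply: ideal_mul_sum => k.
exact: (cover_functional_rad (fmcoord k \o s)).
Qed.
End ProjectiveCover.

Section SharpFlatQuotient.
Variables (R : comPzRingType) (M : lmodType R) (C : M -> M -> Prop) (I : R -> Prop).
Hypothesis HC : is_linrel C.
Hypothesis HI : forall m, ideal_mul I m ->
  exists a b, [/\ lr_d (linrel_inv C) a, lr_d C b & m = a + b].

Lemma lr_sharp_ideal_flat m : lr_sharp C m -> ideal_mul I m -> lr_flat C m.
Proof.
move=> m_sharp /HI [a [b [a_dV b_d m_ab]]].
exact: lr_sharp_flat m_sharp a_dV b_d m_ab.
Qed.

Lemma lr_sharp_scale_flat r m : I r -> lr_sharp C m -> lr_flat C (r *: m).
Proof.
move=> Ir m_sharp; apply: lr_sharp_ideal_flat; last exact: ideal_mulZ.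
exact: (submodZ (lr_sharp_submodule HC)).
Qed.

Local Notation sharp := (Submodule (lr_sharp_submodule HC)).
Local Notation flat := (Submodule (lr_flat_submodule HC)).
Local Notation Q := (subquot sharp flat).

Lemma lr_sqcompat : sqcompat sharp flat C.
Proof. by split=> //=; [apply: lr_sharp_step | apply: (lr_flat_step HC)]. Qed.

Lemma lr_sqcompat_inv : sqcompat sharp flat (linrel_inv C).
Proof.
split=> //= [|m|u x]; first exact: linrel_inv_linrel.
  by rewrite -lr_sharp_inv; apply: lr_sharp_step.
by rewrite -lr_sharp_inv -lr_flat_inv; apply: (lr_flat_step (linrel_inv_linrel HC)).
Qed.

Lemma sq_ideal_scale0 r (a : Q) : I r -> r *: a = 0.
Proof.
move=> Ir; have [m m_sharp ->] := sqproj_onto a.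
have rm_sharp := submodZ (lr_sharp_submodule HC) r m_sharp.
by rewrite -sqprojZ //; apply/(sqproj_eq0 (A := sharp) flat rm_sharp)/lr_sharp_scale_flat.
Qed.

Lemma sq_ideal_mul0 (P : lmodType R) (f : {linear P -> Q}) x :
  ideal_mul I x -> f x = 0.
Proof.
elim=> [|r y Ir|y z _ fy0 _ fz0]; first exact: linear0.
  by rewrite linearZ_LR sq_ideal_scale0.
by rewrite linearD fy0 fz0 addr0.
Qed.

Lemma cover_graph_iso (P : lmodType R) (p : {linear P -> Q}) (S : {linear P -> P}) :
  projective_cover p -> is_jacobson_radical I ->
  (forall x, p (S x) = sqinduced sharp flat C (p x)) ->
  quotient_iso I C S (fun x m => lr_sharp C m /\ p x = sqproj sharp flat m).
Proof.
move=> cover Irad pS; have [_ psurj _] := cover; have hA := lr_sharp_submodule HC.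
split.
- split; first by split; [apply: (submod0 hA) | rewrite linear0].
  split=> [x y m n [m_sharp pxm] [n_sharp pyn]|r x m [m_sharp pxm]]; split.
  + exact: (submodD hA).
  + by rewrite linearD pxm pyn sqprojD.
  + exact: (submodZ hA).
  + by rewrite linearZ_LR pxm sqprojZ.
- split=> [x m []//|x]; exists (sqval (p x)).
  by split; [exact: (sqval_mem (p x)) | rewrite sqvalK].
- by move=> m m_sharp; have [x px] := psurj (sqproj sharp flat m); exists x.
- move=> x m [m_sharp pxm]; have m0 := sqproj_eq0 (A := sharp) flat m_sharp.
  split=> [/m0 pm0|Ix]; first by apply: (cover_kernel_rad cover Irad); rewrite pxm.
  by apply/m0; rewrite -pxm; apply: sq_ideal_mul0.
- move=> x m [m_sharp pxm]; have [c Cmc c_sharp] := lr_sharp_step m_sharp.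
  have pSx : p (S x) = sqproj sharp flat c.
    by rewrite pS pxm (sqinducedE lr_sqcompat m_sharp Cmc c_sharp).
  exists (sqval (p (S x))); split.
    by split; [exact: (sqval_mem (p (S x))) | rewrite sqvalK].
  exists (sqval (p (S x)) - c), c; split=> //; last by rewrite subrK.
  by rewrite pSx; apply: (sqval_projB (A := sharp) flat c_sharp).
Qed.

Theorem lr_sharp_flat_cover : is_jacobson_radical I -> perfect_ring R ->
  exists (P : lmodType R) (T : {linear P -> P}) (Phi : P -> M -> Prop),
    [/\ bijective T, projective P & quotient_iso I C T Phi].
Proof.
move=> Irad perfect; have [P [p cover]] := perfect Q.
have [projP psurj _] := cover.
have [S pS] := projective_lift projP psurj (sqinduced_linear lr_sqcompat).
have [S' pS'] := projective_lift projP psurj (sqinduced_linear lr_sqcompat_inv).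
have Sbij : bijective S.
  apply: (cover_lift_bij cover (S' := S')) => x; [rewrite pS' pS | rewrite pS pS'].
    exact: (sqinducedK lr_sqcompat lr_sqcompat_inv).
  exact: (sqinducedK lr_sqcompat_inv lr_sqcompat).
exists P, S, (fun x m => lr_sharp C m /\ p x = sqproj sharp flat m).
by split=> //; apply: cover_graph_iso.
Qed.
End SharpFlatQuotient.

Theorem lemma4p12 (R : comPzRingType) (M : lmodType R) (C : M -> M -> Prop)
  (I : R -> Prop) :
  is_linrel C -> is_ideal I ->
  (forall m, ideal_mul I m ->
     exists a b, [/\ lr_d (linrel_inv C) a, lr_d C b & m = a + b]) ->
  ((forall m, lr_sharp C m -> ideal_mul I m -> lr_flat C m) /\
   (* in particular C^sharp / C^flat is annihilated by I, i.e. an R/I-module *)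
   (forall r m, I r -> lr_sharp C m -> lr_flat C (r *: m))) /\
  (is_jacobson_radical I -> perfect_ring R ->
   exists (P : lmodType R) (T : {linear P -> P}) (Phi : P -> M -> Prop),
     [/\ bijective T, projective P & quotient_iso I C T Phi]).
Proof.
move=> HC _ HI; split; first split.
- exact: lr_sharp_ideal_flat HC HI.
- exact: (lr_sharp_scale_flat HC HI).
- exact: lr_sharp_flat_cover HC HI.
Qed.
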